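(* With the setup of the context, let $\mu$ be any weight on $F$. Then for every $x\in V(G)$ and $y\in V(H)$, $$\mathbb P_{F,\mu}(x\sim_F y)=\mathbb P_{G,\mu}(x\sim_G v^-)\,\mathbb P_{H_0,\mu}(v^-\sim_{H_0} y)+\mathbb P_{G,\mu}(x\sim_G v^+)\,\mathbb P_{H_0,\mu}(v^+\sim_{H_0} y)-\mathbb P_{G,\mu}(x\sim_G v^-\cap x\sim_G v^+)\,\mathbb P_{H_0,\mu}(v^-\sim_{H_0} y\cap v^+\sim_{H_0} y),$$ where $\mathbb P_{G,\mu}$ and $\mathbb P_{H_0,\mu}$ denote the percolation measures with respect to the restrictions of $\mu$ to $E(G)$ and $E(H_0)$ respectively.
   Context: All graphs are finite and simple. For a graph $G$, a weight is a function $\mu\colon E(G)\to[0,1]$; the associated edge-percolation probability space has sample space $\mathscr P(E(G))$, with $\mathbb P_{G,\mu}(X)=\prod_{e\in X}\mu(e)\prod_{e\notin X}(1-\mu(e))$ for $X\subseteq E(G)$ (edges independently open, edge $e$ with probability $\mu(e)$). For vertices $x,y$, $(x\sim_G y)$ is the event that $x$ and $y$ are joined by a path of open edges of $G$. The bunkbed graph $BB(G)=G\,\Box\,K_2$ has vertex set $V(G)\times\{0,1\}$, writing $x^-=(x,0)$, $x^+=(x,1)$, with edges $x^-y^-$ and $x^+y^+$ for every $xy\in E(G)$ and vertical edges $x^-x^+$ for every $x\in V(G)$. Setup: let $\overline F$ be a graph and $v\in V(\overline F)$ a cut vertex; let $V_1,\dots,V_k$ ($k\ge2$) be the vertex sets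 of the components of $\overline F\setminus\{v\}$, fix $I\subseteq\{1,\dots,k\}$, and set $\overline G=\overline F[\bigcup_{i\in I}V_i\cup\{v\}]$, $\overline H=\overline F[\bigcup_{i\notin I}V_i\cup\{v\}]$ (induced subgraphs). Let $F=BB(\overline F)$, $G=BB(\overline G)$, $H=BB(\overline H)$, regarded as subgraphs of $F$, and $H_0=H\setminus\{v^-v^+\}$ (the graph $H$ with the edge $v^-v^+$ removed); thus $E(F)$ is the disjoint union of $E(G)$ and $E(H_0)$. *)

From HB Require Import structures.
From mathcomp Require Import all_boot all_order all_algebra.
From mathcomp Require Import reals.
Set Implicit Arguments. Unset Strict Implicit. Unset Printing Implicit Defensive.
Import Order.TTheory GRing.Theory Num.Theory.
Local Open Scope ring_scope.

Section Defs.
Variable T : finType.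
Variable adj : rel T.

Definition simple_graph := symmetric adj /\ irreflexive adj.

Definition restr (W : {set T}) : rel T :=
  [rel a b | [&& adj a b, a \in W & b \in W]].

Definition components (W : {set T}) : {set {set T}} :=
  [set [set w in W | connect (restr W) u w] | u in W].

Definition cut_vertex (v : T) :=
  (#|components [set: T]| < #|components [set~ v]|)%N.

(* Bunkbed vertices: (x,false) = x^-, (x,true) = x^+ ; edges are 2-sets. *)
Definition bbE (W : {set T}) : {set {set (T * bool)}} :=
  [set e | [exists a, exists c, exists b : bool,
     [&& a \in W, c \in W, adj a c & e == [set (a, b); (c, b)]]]]
  :|: [set [set (a, false); (a, true)] | a in W].
End Defs.

(* x and y joined by a path of open edges (X = set of open edges) *)
Definition conn (V : finType) (x y : V) (X : {set {set V}}) : bool :=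
  connect [rel a b | [set a; b] \in X] x y.

Definition perc (V : finType) (R : realType) (E : {set {set V}})
  (mu : {set V} -> R) (A : pred {set {set V}}) : R :=
  \sum_(X in powerset E | A X)
     (\prod_(e in X) mu e * \prod_(e in E :\: X) (1 - mu e)).

From HB Require Import structures.
From mathcomp Require Import all_boot all_order all_algebra.
From mathcomp Require Import reals.
Import Order.TTheory GRing.Theory Num.Theory.
Set Implicit Arguments. Unset Strict Implicit. Unset Printing Implicit Defensive.
Local Open Scope ring_scope.

(* The edges of BB(F) split into the disjoint sets E(G) and E(H_0), so the
   restrictions of a configuration to them are independent.  As V(G) and V(H)
   share only v^- and v^+, an open path can change sides only at these two
   gates, whence
     x ~F y  <->  (x ~G v^- /\ v^- ~H0 y) \/ (x ~G v^+ /\ v^+ ~H0 y),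
   and inclusion-exclusion together with independence gives the formula. *)

Lemma setU_splitE (T : finType) (E1 E2 A B : {set T}) : [disjoint E1 & E2] ->
  (((A :|: B) :&: E1, (A :|: B) :&: E2) == (A, B)) = (A \subset E1) && (B \subset E2).
Proof.
move=> dE; apply/eqP/andP => [[<- <-]|[AE1 BE2]]; first by rewrite !subsetIr.
have dBE1 : [disjoint B & E1] by rewrite disjoint_sym in dE; exact: disjointWl dE.
have dAE2 : [disjoint A & E2] := disjointWl AE1 dE.
by rewrite !setIUl (setIidPl AE1) (setIidPl BE2) !disjoint_setI0 // setU0 set0U.
Qed.

Lemma setDU_split (T : finType) (E1 E2 A B : {set T}) :
  [disjoint E1 & E2] -> A \subset E1 -> B \subset E2 ->
  (E1 :|: E2) :\: (A :|: B) = (E1 :\: A) :|: (E2 :\: B).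
Proof.
move=> dE AE1 BE2.
have dE1B : [disjoint E1 & B] := disjointWr BE2 dE.
have dE2A : [disjoint E2 & A] by rewrite disjoint_sym in dE; exact: disjointWr AE1 dE.
rewrite setDUl !setDUr (setDidPl dE1B) (setDidPl dE2A).
by rewrite (setIidPl (subsetDl _ _)) (setIidPr (subsetDl _ _)).
Qed.

Lemma prod_setU (R : comPzSemiRingType) (T : finType) (A B : {set T}) (F : T -> R) :
  [disjoint A & B] -> \prod_(i in A :|: B) F i = \prod_(i in A) F i * \prod_(i in B) F i.
Proof. by move=> dAB; rewrite -bigU //; apply: eq_bigl => i; rewrite inE. Qed.

Section Percolation.
Variables (R : realType) (V : finType) (mu : {set V} -> R).
Implicit Types (E X : {set {set V}}) (P Q : pred {set {set V}}).

Lemma eq_perc E P Q :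
  (forall X, X \subset E -> P X = Q X) -> perc E mu P = perc E mu Q.
Proof.
move=> PQ; rewrite /perc; apply: eq_bigl => X; rewrite powersetE.
by case: (boolP (X \subset E)) => // /PQ ->.
Qed.

Lemma percU E P Q :
  perc E mu (fun X => P X || Q X) =
  perc E mu P + perc E mu Q - perc E mu (fun X => P X && Q X).
Proof.
rewrite /perc !big_mkcondr -big_split -sumrB; apply: eq_bigr => X _.
by case: (P X); case: (Q X); rewrite /= ?addrK ?subr0 ?addr0 ?add0r.
Qed.

Lemma perc_indep E1 E2 P Q : [disjoint E1 & E2] ->
  perc (E1 :|: E2) mu (fun X => P (X :&: E1) && Q (X :&: E2)) =
  perc E1 mu P * perc E2 mu Q.
Proof.
move=> dE; rewrite /perc big_distrlr pair_big_dep /=.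
rewrite (reindex_onto (fun AB => AB.1 :|: AB.2) (fun X => (X :&: E1, X :&: E2))) /=;
  last by move=> X /andP[+ _]; rewrite powersetE -setIUr => /setIidPl.
apply: eq_big => [[A B]|[A B]] /=.
  rewrite setU_splitE // !powersetE.
  case: (boolP (A \subset E1)) => AE1; case: (boolP (B \subset E2)) => BE2;
    rewrite /= ?andbF //.
  have /eqP[-> ->] : ((A :|: B) :&: E1, (A :|: B) :&: E2) == (A, B).
    by rewrite setU_splitE ?AE1.
  by rewrite setUSS // andbT.
rewrite setU_splitE // => /andP[_ /andP[AE1 BE2]].
rewrite setDU_split // !prod_setU; first by rewrite mulrACA.
  exact: disjointW (subsetDl _ _) (subsetDl _ _) dE.
exact: disjointW AE1 BE2 dE.
Qed.

Lemma perc_indepU E1 E2 P1 P2 Q1 Q2 : [disjoint E1 & E2] ->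
  perc (E1 :|: E2) mu
    (fun X => P1 (X :&: E1) && Q1 (X :&: E2) || P2 (X :&: E1) && Q2 (X :&: E2)) =
  perc E1 mu P1 * perc E2 mu Q1 + perc E1 mu P2 * perc E2 mu Q2
  - perc E1 mu (fun X => P1 X && P2 X) * perc E2 mu (fun X => Q1 X && Q2 X).
Proof.
move=> dE; rewrite percU (perc_indep P1 Q1) // (perc_indep P2 Q2) //.
rewrite -(perc_indep (fun X => P1 X && P2 X)) //; congr (_ - _).
by apply: eq_perc => X _ /=; rewrite andbACA.
Qed.
End Percolation.

Lemma connect_invariant (T : finType) (e : rel T) (P : pred T) x y :
  (forall a b, P a -> e a b -> P b) -> connect e x y -> P x -> P y.
Proof.
move=> Pe /connectP[s es ->]; elim: s x es => //= z s IHs x /andP[exz es] Px.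
exact: IHs es (Pe _ _ Px exz).
Qed.

Lemma conn0 (V : finType) (X : {set {set V}}) a : conn a a X.
Proof. exact: connect0. Qed.

Lemma conn1 (V : finType) (X : {set {set V}}) a b : [set a; b] \in X -> conn a b X.
Proof. exact: connect1. Qed.

Lemma conn_trans (V : finType) (X : {set {set V}}) a b c :
  conn a b X -> conn b c X -> conn a c X.
Proof. exact: connect_trans. Qed.

Lemma conn_subset (V : finType) (X Y : {set {set V}}) a b :
  X \subset Y -> conn a b X -> conn a b Y.
Proof. by move=> XY; apply: connect_sub => c d cd; apply/connect1/(subsetP XY). Qed.

Lemma conn_within (V : finType) (W : pred V) (X : {set {set V}}) a b :
  (forall c d, [set c; d] \in X -> W c) -> conn a b X -> W a -> W b.
Proof. by move=> XW; apply: connect_invariant => c d _ /=; rewrite setUC => /XW. Qed.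

Section Separation.
Variables (V : finType) (X1 X2 : {set {set V}}) (W1 W2 : pred V).
Hypotheses (X1W1 : forall a b, [set a; b] \in X1 -> W1 a)
           (X2W2 : forall a b, [set a; b] \in X2 -> W2 a).

Local Notation c1 a b := (conn a b X1).
Local Notation c2 a b := (conn a b X2).

Definition cut_pair g g' :=
  [/\ W1 g, W2 g, W1 g', W2 g' & forall z, W1 z -> W2 z -> z = g \/ z = g'].

Lemma cut_pairC g g' : cut_pair g g' -> cut_pair g' g.
Proof. by case=> ? ? ? ? W12; split=> // z W1z /(W12 _ W1z) []; [right|left]. Qed.

Variable x : V.
Hypothesis W1x : W1 x.

(* The ways x can reach z when sides are changed only at the gates g, g':
   changing sides more than twice adds nothing, as two changes already join
   both gates. *)
Definition via g g' z := c1 x g && (c2 g z || c2 g g' && c1 g' z).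

Definition reach g g' z := [|| c1 x z, via g g' z | via g' g z].

Lemma reachC g g' z : reach g g' z = reach g' g z.
Proof. by rewrite /reach (orbC (via g g' z)). Qed.

Lemma via_reach g g' z : via g g' z -> reach g g' z.
Proof. by rewrite /reach => ->; rewrite orbT. Qed.

Section Gates.
Variables g g' : V.
Hypothesis gg' : cut_pair g g'.

Lemma reach_step_direct a b :
  c1 x a -> [set a; b] \in X1 :|: X2 -> reach g g' b.
Proof.
case: gg' => _ _ _ _ W12 xa; rewrite inE => /orP[ab|ab].
  by rewrite /reach (conn_trans xa (conn1 ab)).
have [ea|ea] := W12 a (conn_within X1W1 xa W1x) (X2W2 ab); subst a.
  by apply: via_reach; rewrite /via xa (conn1 ab).
by rewrite reachC; apply: via_reach; rewrite /via xa (conn1 ab).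
Qed.

Lemma reach_step_via a b :
  via g g' a -> [set a; b] \in X1 :|: X2 -> reach g g' b.
Proof.
case: gg' => _ W2g W1g' _ W12 /andP[xg ga]; rewrite inE => /orP[ab|ab].
  case/orP: ga => [ga|/andP[gg'2 g'a]].
    have [ea|ea] := W12 a (X1W1 ab) (conn_within X2W2 ga W2g); subst a.
      by rewrite /reach (conn_trans xg (conn1 ab)).
    by apply: via_reach; rewrite /via xg ga (conn1 ab) orbT.
  by apply: via_reach; rewrite /via xg gg'2 (conn_trans g'a (conn1 ab)) orbT.
suff gb : c2 g b by apply: via_reach; rewrite /via xg gb.
case/orP: ga => [ga|/andP[gg'2 g'a]]; first exact: conn_trans ga (conn1 ab).
have [ea|ea] := W12 a (conn_within X1W1 g'a W1g') (X2W2 ab); subst a.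
  exact: conn1 ab.
exact: conn_trans gg'2 (conn1 ab).
Qed.
End Gates.

Lemma reach_step g g' a b : cut_pair g g' ->
  reach g g' a -> [set a; b] \in X1 :|: X2 -> reach g g' b.
Proof.
move=> gg' /or3P[xa|ga|g'a] ab.
- exact: (reach_step_direct gg' xa ab).
- exact: (reach_step_via gg' ga ab).
- by rewrite reachC; exact: (reach_step_via (cut_pairC gg') g'a ab).
Qed.

Lemma reach_conn g g' y : cut_pair g g' -> conn x y (X1 :|: X2) -> reach g g' y.
Proof.
move=> gg' /connect_invariant; apply; last by rewrite /reach conn0.
by move=> a b; apply: reach_step.
Qed.

Lemma via_cut_pair g g' y : cut_pair g g' -> W2 y ->
  via g g' y -> (c1 x g && c2 g y) || (c1 x g' && c2 g' y).
Proof.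
case=> _ _ W1g' _ W12 W2y /andP[xg /orP[gy|/andP[gg'2 g'y]]]; first by rewrite xg gy.
have [ey|ey] := W12 y (conn_within X1W1 g'y W1g') W2y; subst y.
  by rewrite xg conn0.
by rewrite xg gg'2.
Qed.

Lemma conn_cut_pair g g' y : cut_pair g g' -> W2 y ->
  conn x y (X1 :|: X2) = (c1 x g && c2 g y) || (c1 x g' && c2 g' y).
Proof.
move=> gg' W2y; apply/idP/idP => [/(reach_conn gg')/or3P[xy|gy|g'y]|].
- case: gg' => _ _ _ _ W12.
  have [ey|ey] := W12 y (conn_within X1W1 xy W1x) W2y; subst y;
    by rewrite xy conn0 ?orbT.
- exact: via_cut_pair.
- by rewrite orbC; apply: via_cut_pair (cut_pairC gg') W2y g'y.
by case/orP=> /andP[xg gy];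
  apply: conn_trans (conn_subset (subsetUl _ _) xg) (conn_subset (subsetUr _ _) gy).
Qed.
End Separation.

Section Bunkbed.
Variables (T : finType) (adj : rel T).

Definition vedge (a : T) : {set T * bool} := [set (a, false); (a, true)].

Lemma bbE_hor (W : {set T}) a c (b : bool) : a \in W -> c \in W -> adj a c ->
  [set (a, b); (c, b)] \in bbE adj W.
Proof.
move=> aW cW ac; rewrite !inE; apply/orP; left.
by apply/existsP; exists a; apply/existsP; exists c; apply/existsP; exists b;
  rewrite aW cW ac eqxx.
Qed.

Lemma bbE_vert (W : {set T}) a : a \in W -> vedge a \in bbE adj W.
Proof. by move=> aW; rewrite inE; apply/orP; right; apply: imset_f. Qed.

Variant bbE_spec (W : {set T}) : {set T * bool} -> Prop :=
  | BbEHor a c b of a \in W & c \in W & adj a c : bbE_spec W [set (a, b); (c, b)]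
  | BbEVert a of a \in W : bbE_spec W (vedge a).

Lemma bbEP (W : {set T}) e : e \in bbE adj W -> bbE_spec W e.
Proof.
rewrite inE => /orP[|/imsetP[a aW ->]]; last exact: BbEVert.
rewrite inE => /existsP[a /existsP[c /existsP[b /and4P[aW cW ac /eqP->]]]].
exact: BbEHor.
Qed.

Lemma bbE_fst (W : {set T}) (a b : T * bool) : [set a; b] \in bbE adj W -> a.1 \in W.
Proof.
move: (set21 a b) => + /bbEP E.
by case: E => [c d s cW dW _|c cW] /set2P[]->.
Qed.

Lemma bbES (W1 W2 : {set T}) : W1 \subset W2 -> bbE adj W1 \subset bbE adj W2.
Proof.
move=> /subsetP W12; apply/subsetP => e /bbEP[a c b aW cW ac|a aW].
  by apply: bbE_hor; rewrite ?W12.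
by apply: bbE_vert; rewrite W12.
Qed.

Lemma hor_neq_vedge a c b d : [set (a, b); (c, b)] != vedge d.
Proof.
apply/eqP => E; have := set21 (d, false) (d, true); have := set22 (d, false) (d, true).
by rewrite -/(vedge d) -E => /set2P[[_ <-]|[_ <-]] /set2P[[]|[]].
Qed.

Lemma vedge_inj : injective vedge.
Proof.
move=> a c E; have := set21 (a, false) (a, true).
by rewrite -/(vedge a) E => /set2P[[]|[]].
Qed.
End Bunkbed.

Section CutVertexSplit.
Variables (T : finType) (adj : rel T) (v : T) (I : {set {set T}}).
Hypotheses (adj_simple : simple_graph adj) (I_comps : I \subset components adj [set~ v]).

Local Notation adjv := (restr adj [set~ v]).

Definition comp w := [set w' in [set~ v] | connect adjv w w'].

Lemma adjv_sym : symmetric adjv.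
Proof.
move=> a b; rewrite /restr /= (proj1 adj_simple a b).
by case: (a \in _); case: (b \in _); rewrite ?andbF ?andbT.
Qed.

Lemma comp_eq u w : w \in comp u -> comp u = comp w.
Proof.
rewrite inE => /andP[_ uw]; apply/setP => z; rewrite !inE.
by rewrite (same_connect (sym_connect_sym adjv_sym) uw).
Qed.

Lemma mem_comp w : w != v -> w \in comp w.
Proof. by move=> wv; rewrite inE in_setC1 wv connect0. Qed.

Lemma comp_components w : w != v -> comp w \in components adj [set~ v].
Proof. by move=> wv; apply: imset_f; rewrite in_setC1. Qed.

Lemma mem_bigcup_comps (J : {set {set T}}) w : J \subset components adj [set~ v] ->
  (w \in \bigcup_(C in J) C) = (w != v) && (comp w \in J).
Proof.
move=> /subsetP Jc; apply/bigcupP/andP => [[C CJ wC]|[wv wJ]].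
  have /imsetP[u _ Cu] := Jc C CJ; have {}Cu : C = comp u by [].
  rewrite Cu in wC CJ; split; last by rewrite -(comp_eq wC).
  by move: wC; rewrite inE in_setC1 => /andP[].
by exists (comp w) => //; apply: mem_comp.
Qed.

Definition VG := (\bigcup_(C in I) C) :|: [set v].
Definition VH := (\bigcup_(C in components adj [set~ v] :\: I) C) :|: [set v].

Lemma memVG w : (w \in VG) = (w == v) || (comp w \in I).
Proof. by rewrite in_setU mem_bigcup_comps // in_set1 orbC; case: eqP. Qed.

Lemma memVH w : (w \in VH) = (w == v) || (comp w \notin I).
Proof.
rewrite in_setU mem_bigcup_comps ?subsetDl // in_set1 in_setD orbC.
by case: eqVneq => //= wv; rewrite comp_components // andbT.
Qed.

Lemma VG_v : v \in VG. Proof. by rewrite memVG eqxx. Qed.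
Lemma VH_v : v \in VH. Proof. by rewrite memVH eqxx. Qed.

Lemma VG_VH_cover w : (w \in VG) || (w \in VH).
Proof. by rewrite memVG memVH; case: (w == v); case: (comp w \in I). Qed.

Lemma VG_VH_meet w : w \in VG -> w \in VH -> w = v.
Proof. by rewrite memVG memVH; case: eqP => //= _ ->. Qed.

Lemma adj_same_side a c : adj a c ->
  (a \in VG) && (c \in VG) || (a \in VH) && (c \in VH).
Proof.
move=> ac; case: (eqVneq a v) => [->|av]; first by rewrite VG_v VH_v VG_VH_cover.
case: (eqVneq c v) => [->|cv]; first by rewrite VG_v VH_v !andbT VG_VH_cover.
rewrite !memVG !memVH (negbTE av) (negbTE cv) /=.
have -> : comp a = comp c.
  by apply: comp_eq; rewrite inE in_setC1 cv connect1 // /restr /= ac !in_setC1 av cv.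
by case: (comp c \in I).
Qed.

Lemma bbE_split : bbE adj [set: T] = bbE adj VG :|: (bbE adj VH :\ vedge v).
Proof.
apply/eqP; rewrite eqEsubset subUset bbES ?subsetT //=.
rewrite (subset_trans (subsetDl _ _) (bbES _ (subsetT _))) andbT.
apply/subsetP => e /bbEP[a c b _ _ ac|a _].
  case/orP: (adj_same_side ac) => /andP[aS cS].
    by rewrite in_setU (bbE_hor _ aS cS ac).
  by rewrite in_setU in_setD1 hor_neq_vedge; apply/orP; right; apply: bbE_hor.
have /orP[aG|aH] := VG_VH_cover a; first by rewrite in_setU (bbE_vert _ aG).
case: (eqVneq a v) => [->|av]; first by rewrite in_setU (bbE_vert _ VG_v).
have vav : vedge a != vedge v by apply: contra_neq av => /vedge_inj.
by rewrite in_setU in_setD1 vav; apply/orP; right; apply: bbE_vert.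
Qed.

Lemma bbE_split_disjoint : [disjoint bbE adj VG & bbE adj VH :\ vedge v].
Proof.
rewrite -setI_eq0; apply/eqP/setP => e; rewrite in_setI in_setD1 in_set0.
apply/negbTE/negP => /and3P[eG ev /bbEP eH]; case: eH eG ev => [a c b aH cH ac|a aH].
  move=> /[dup] /bbE_fst /= aG; rewrite setUC => /bbE_fst /= cG _.
  by move: ac; rewrite (VG_VH_meet aG aH) (VG_VH_meet cG cH) (proj2 adj_simple).
by move=> /bbE_fst /= aG; rewrite (VG_VH_meet aG aH) eqxx.
Qed.

Lemma bbE_cut_pair :
  cut_pair [pred z : T * bool | z.1 \in VG] [pred z | z.1 \in VH] (v, false) (v, true).
Proof.
split; rewrite /= ?VG_v ?VH_v // => -[a b] /= aG aH.
by rewrite (VG_VH_meet aG aH); case: b; [right|left].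
Qed.
End CutVertexSplit.

Theorem lemma3p3 (R : realType) (T : finType) (adj : rel T)
  (Hsimple : simple_graph adj) (v : T) (Hcut : cut_vertex adj v)
  (Hk : (2 <= #|components adj [set~ v]|)%N)
  (I : {set {set T}}) (HI : I \subset components adj [set~ v])
  (mu : {set (T * bool)} -> R)
  (Hmu : forall e, e \in bbE adj [set: T] -> 0 <= mu e <= 1) :
  let VG := (\bigcup_(C in I) C) :|: [set v] in
  let VH := (\bigcup_(C in components adj [set~ v] :\: I) C) :|: [set v] in
  let EF := bbE adj [set: T] in
  let EG := bbE adj VG in
  let EH0 := bbE adj VH :\ [set (v, false); (v, true)] in
  forall x y : T * bool, x.1 \in VG -> y.1 \in VH ->
  perc EF mu (conn x y) =
    perc EG mu (conn x (v, false)) * perc EH0 mu (conn (v, false) y)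
  + perc EG mu (conn x (v, true)) * perc EH0 mu (conn (v, true) y)
  - perc EG mu (fun X => conn x (v, false) X && conn x (v, true) X)
    * perc EH0 mu (fun X => conn (v, false) y X && conn (v, true) y X).
Proof.
move=> VG VH EF EG EH0 x y xG yH.
have dE : [disjoint EG & EH0] := bbE_split_disjoint Hsimple HI.
rewrite /EF (bbE_split Hsimple HI) -perc_indepU //; apply: eq_perc => X XE.
have {1}-> : X = (X :&: EG) :|: (X :&: EH0) by rewrite -setIUr; apply/esym/setIidPl.
apply: (conn_cut_pair (W1 := [pred z | z.1 \in VG]) (W2 := [pred z | z.1 \in VH])) => //.
- by move=> a b /setIP[_ /bbE_fst].
- by move=> a b /setIP[_ /setD1P[_ /bbE_fst]].
- exact: bbE_cut_pair.
Qed.
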